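(* For every $m\ge1$, the cardinality sensitivity of DSIC one-player auctions satisfies $\mu_c(m)=1$.
   Context: One-player setting with $m$ items: types $\theta\in\mathbb R^m$, allocations in $\{0,1\}^m$; an allocation function $f:\mathbb R^m\to\{0,1\}^m$ is implementable if there is a payment function $p$ with $\theta\cdot f(\theta)-p(\theta)\ge\theta\cdot f(\theta')-p(\theta')$ for all $\theta,\theta'$. Difference sets $Q_a=\mathrm{cl}\{\theta:f(\theta)=a\}$; indifference complex $\mathcal I(f)=\{\mathcal O\subseteq\{0,1\}^m:\bigcap_{a\in\mathcal O}Q_a\ne\emptyset\}$. Let $\Phi_m$ be the set of indifference complexes $\mathcal I(f)$ of implementable $f$. The cardinality distance is $\mathrm{Cd}(a,b)=\big||a|_1-|b|_1\big|$. The cardinality sensitivity is $\mu_c(m)=\min_{\mathcal I\in\Phi_m}\max\{\mathrm{Cd}(a,b): a,b\in F\text{ for some }F\in\mathcal I\}$.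
   Formalization: $\Phi_m$ collects the indifference complexes $\mathcal I(f)$ only of implementable f that are onto $\{0,1\}^m$, every allocation being f(θ) for some type θ. The paper assumes this as well. *)

From HB Require Import structures.
From mathcomp Require Import all_boot all_order all_algebra.
From mathcomp Require Import all_classical all_reals all_analysis.
Set Implicit Arguments. Unset Strict Implicit. Unset Printing Implicit Defensive.
Import Order.TTheory GRing.Theory Num.Theory.
Import numFieldTopology.Exports.
Local Open Scope classical_set_scope.
Local Open Scope ring_scope.

Definition alloc (m : nat) := {ffun 'I_m -> bool}.

(* Types: theta in R^m, represented as row vectors 'rV[R]_m (with their
   standard normed/topological structure from MathComp-Analysis). *)

Definition dotp {R : realType} {m : nat} (t : 'rV[R]_m) (a : alloc m) : R :=
  \sum_(i < m) t ord0 i * (a i)%:R.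

Definition implementable {R : realType} {m : nat} (f : 'rV[R]_m -> alloc m) :=
  exists p : 'rV[R]_m -> R, forall t t' : 'rV[R]_m,
    dotp t (f t') - p t' <= dotp t (f t) - p t.

Definition Qset {R : realType} {m : nat} (f : 'rV[R]_m -> alloc m) (a : alloc m)
  : set 'rV[R]_m := closure [set t | f t = a].

Definition indiff {R : realType} {m : nat} (f : 'rV[R]_m -> alloc m)
  : set {set alloc m} :=
  [set O | exists t : 'rV[R]_m, forall a, a \in O -> Qset f a t].

(* |a|_1 and the cardinality distance Cd(a,b) = | |a|_1 - |b|_1 |. *)
Definition norm1 {m : nat} (a : alloc m) : nat := #|[set i | a i]|.
Definition Cd {m : nat} (a b : alloc m) : nat :=
  ((norm1 a - norm1 b) + (norm1 b - norm1 a))%N.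

Definition Phi (R : realType) (m : nat) : set (set {set alloc m}) :=
  [set I | exists f : 'rV[R]_m -> alloc m,
     [/\ implementable f, (forall a : alloc m, exists t, f t = a) & I = indiff f]].

Definition sensitivity {m : nat} (I : set {set alloc m}) : nat :=
  \max_(F : {set alloc m} | `[< I F >]) \max_(a in F) \max_(b in F) Cd a b.

Definition is_mu_c (R : realType) (m n : nat) : Prop :=
  (exists I, @Phi R m I /\ sensitivity I = n) /\
  (forall I, @Phi R m I -> (n <= sensitivity I)%N).

From mathcomp Require Import all_boot all_order all_algebra.
From mathcomp Require Import all_classical all_reals all_analysis.
From mathcomp Require Import lra zify.
Set Implicit Arguments. Unset Strict Implicit. Unset Printing Implicit Defensive.
Import Order.TTheory GRing.Theory Num.Theory.
Import numFieldTopology.Exports.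

(** Upper bound: let f* choose a bundle maximising the penalised utility
    theta.a - |a|^2 (with payment |a|^2 it is implementable).  By continuity,
    a is still a maximiser at every type of Q_a.  If two maximisers had
    |a| >= |b| + 2, moving one item of a \ b into b would keep
    theta.a + theta.b but strictly decrease |a|^2 + |b|^2, by strict
    convexity of k |-> k^2; so all cells of I(f* ) have cardinality spread
    at most 1.
    Lower bound: a surjective f gives the empty bundle to some type and the
    full bundle to another.  The segment between them is connected, so some
    type lies in the closure of f^-1(empty) and of f^-1(b) for a nonempty b,
    and {empty, b} is a cell with Cd = |b| >= 1. *)

Section Bundles.
Variable m : nat.
Implicit Types a b : alloc m.

Lemma norm1E a : norm1 a = #|[set i | a i]%SET|.
Proof. by apply: eq_card => i; rewrite !inE; apply/idP/idP; rewrite in_setE. Qed.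

Lemma norm1_le a : (norm1 a <= m)%N.
Proof. by rewrite norm1E -[X in (_ <= X)%N]card_ord max_card. Qed.

Lemma norm1_eq0 a : (norm1 a == 0)%N = (a == [ffun=> false]).
Proof.
rewrite norm1E cards_eq0; apply/eqP/eqP => [a0 | ->].
  apply/ffunP => i; rewrite ffunE; apply/negbTE/negP => ai.
  have : i \in [set j | a j]%SET by rewrite inE.
  by rewrite a0 inE.
by apply/finset.setP => i; rewrite !inE ffunE.
Qed.

Lemma norm1_lt_exists a b : (norm1 b < norm1 a)%N -> exists i, a i && ~~ b i.
Proof.
move=> ltba; apply/existsP; apply: contraLR ltba; rewrite negb_exists => /forallP nab.
rewrite -leqNgt !norm1E; apply: subset_leq_card; apply/fintype.subsetP => i.
by rewrite !inE => ai; move: (nab i); rewrite ai negbK.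
Qed.

Definition drop_item a i : alloc m := [ffun j => a j && (j != i)].
Definition add_item a i : alloc m := [ffun j => a j || (j == i)].

Lemma norm1_drop_item a i : a i -> norm1 (drop_item a i) = (norm1 a).-1.
Proof.
move=> ai; rewrite !norm1E (cardsD1 i [set j | a j]) inE ai /=.
by apply: eq_card => j; rewrite !inE ffunE andbC.
Qed.

Lemma norm1_add_item a i : ~~ a i -> norm1 (add_item a i) = (norm1 a).+1.
Proof.
move=> nai; rewrite !norm1E.
have -> : [set j | add_item a i j]%SET = i |: [set j | a j].
  by apply/finset.setP => j; rewrite !inE ffunE orbC.
by rewrite cardsU1 inE nai.
Qed.

Lemma dotp_move_item (R : realType) (t : 'rV[R]_m) a b i : a i -> ~~ b i ->
  (dotp t (drop_item a i) + dotp t (add_item b i) = dotp t a + dotp t b)%R.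
Proof.
move=> ai nbi; rewrite /dotp -!big_split /=; apply: eq_bigr => j _; rewrite !ffunE.
have [->|_] := eqVneq j i; last by rewrite andbT orbF.
by rewrite ai (negbTE nbi) /= mulr0 mulr1 addr0 add0r.
Qed.

End Bundles.

Lemma sqrn_balance_lt k l : (l + 2 <= k)%N -> (k.-1 ^ 2 + l.+1 ^ 2 < k ^ 2 + l ^ 2)%N.
Proof. by case: k => [|k] /=; [rewrite addn2 | nia]. Qed.

Section PenalisedUtility.
Variables (R : realType) (m : nat).
Implicit Types (t : 'rV[R]_m) (a b : alloc m).
Local Open Scope ring_scope.

Definition pen_util t a : R := dotp t a - (norm1 a ^ 2)%N%:R.

Definition maximiser t a := forall c, pen_util t c <= pen_util t a.

Lemma maximiser_Cd_le1 t a b : maximiser t a -> maximiser t b -> (Cd a b <= 1)%N.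
Proof.
suff no_gap a' b' : maximiser t a' -> maximiser t b' -> ~ (norm1 b' + 2 <= norm1 a')%N.
  by move=> ma mb; have := no_gap _ _ ma mb; have := no_gap _ _ mb ma; rewrite /Cd; lia.
move=> ma mb gap.
have [i /andP [ai nbi]] : exists i, a' i && ~~ b' i by apply: norm1_lt_exists; lia.
have := ma (drop_item a' i); have := mb (add_item b' i).
rewrite /pen_util norm1_drop_item // norm1_add_item //.
have := dotp_move_item t ai nbi.
have := sqrn_balance_lt gap; rewrite -(ltr_nat R) !natrD.
lra.
Qed.

Lemma dotp_continuous a : continuous (fun t : 'rV[R]_m => dotp t a).
Proof.
apply: continuous_big => [|i _]; first exact: add_continuous.
move=> t; apply: (@continuousM R _ (fun s : 'rV[R]_m => s ord0 i) (fun=> (a i)%:R)).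
  exact: coord_continuous.
exact: cst_continuous.
Qed.

Lemma pen_util_continuous a : continuous (pen_util ^~ a).
Proof.
move=> t; apply: (@continuousB R R^o _ (fun s => dotp s a) (fun=> (norm1 a ^ 2)%N%:R)).
  exact: dotp_continuous.
exact: cst_continuous.
Qed.

Definition argmax_alloc t : alloc m := Order.arg_max [ffun=> false] xpredT (pen_util t).

Lemma argmax_allocP t : maximiser t (argmax_alloc t).
Proof. by rewrite /argmax_alloc; case: arg_maxP => // a _ amax c; exact: amax. Qed.

Lemma argmax_alloc_implementable : implementable argmax_alloc.
Proof.
exists (fun t => (norm1 (argmax_alloc t) ^ 2)%N%:R) => t t'.
exact: argmax_allocP.
Qed.

Lemma Qset_argmax_alloc a t : Qset argmax_alloc a t -> maximiser t a.
Proof.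
move=> Qat c.
have closed_ac : closed [set s : 'rV[R]_m | 0 <= pen_util s a - pen_util s c].
  apply: (@preimage_closed _ _ (fun s => pen_util s a - pen_util s c) [set x | 0 <= x]).
    move=> s _; apply: (@continuousB R R^o _ (pen_util ^~ a) (pen_util ^~ c));
    exact: pen_util_continuous.
  exact: closed_ge.
have : (closure [set s | argmax_alloc s = a] `<=`
        [set s | 0 <= pen_util s a - pen_util s c])%classic.
  rewrite [X in (_ `<=` X)%classic](closure_id _).1 //; apply: closureS => s /= <-.
  by rewrite subr_ge0 argmax_allocP.
by move/(_ t Qat) => /=; rewrite subr_ge0.
Qed.

Definition sign_type (K : R) a : 'rV[R]_m := \row_i (if a i then K else - K).

Lemma dotp_sign_type_gap K a b : 0 <= K -> b != a ->
  K <= dotp (sign_type K a) a - dotp (sign_type K a) b.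
Proof.
move=> K0 ba.
have [i abi] : exists i, a i != b i.
  apply/existsP; apply: contraR ba; rewrite negb_exists => /forallP ab.
  by apply/eqP/ffunP => j; move: (ab j); rewrite negbK => /eqP.
have term j : sign_type K a ord0 j * (a j)%:R - sign_type K a ord0 j * (b j)%:R =
              if a j != b j then K else 0.
  by rewrite mxE; case: (a j); case: (b j) => /=; lra.
rewrite /dotp -sumrB (bigD1 i) //= term abi lerDl.
by apply: sumr_ge0 => j _; rewrite term; case: ifP.
Qed.

Lemma argmax_alloc_surjective a : exists t, argmax_alloc t = a.
Proof.
(* K exceeds every possible penalty |b|^2 <= m^2, so the linear term wins. *)
pose K : R := (m ^ 2).+1%:R; pose t := sign_type K a.
exists t; apply/eqP/negPn/negP => ne.
have := dotp_sign_type_gap (ler0n _ _ : 0 <= K) ne; rewrite -/t => gap.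
have := argmax_allocP t a.
have : (norm1 a ^ 2)%N%:R <= (m ^ 2)%N%:R :> R.
  by rewrite ler_nat leq_exp2r // norm1_le.
have : 0 <= (norm1 (argmax_alloc t) ^ 2)%N%:R :> R by exact: ler0n.
have : K = (m ^ 2)%N%:R + 1 by rewrite /K -addn1 natrD.
rewrite /pen_util; lra.
Qed.

End PenalisedUtility.

Section Sensitivity.
Variable m : nat.
Implicit Types (I : set {set alloc m}) (F : {set alloc m}) (a b : alloc m).

Lemma sensitivity_le I n :
  (forall F a b, I F -> a \in F -> b \in F -> (Cd a b <= n)%N) ->
  (sensitivity I <= n)%N.
Proof.
move=> CdI; apply/bigmax_leqP => F /asboolP IF.
by apply/bigmax_leqP => a aF; apply/bigmax_leqP => b bF; exact: CdI IF aF bF.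
Qed.

Lemma Cd_le_sensitivity I F a b :
  I F -> a \in F -> b \in F -> (Cd a b <= sensitivity I)%N.
Proof.
move=> IF aF bF; apply: (bigop.bigmax_sup F); first exact/asboolP.
by apply: (bigop.bigmax_sup a aF); exact: (bigop.bigmax_sup b bF).
Qed.

End Sensitivity.

Lemma sensitivity_argmax_alloc (R : realType) m :
  (sensitivity (indiff (@argmax_alloc R m)) <= 1)%N.
Proof.
apply: sensitivity_le => F a b [t Qt] aF bF.
exact: maximiser_Cd_le1 (Qset_argmax_alloc (Qt a aF)) (Qset_argmax_alloc (Qt b bF)).
Qed.

Section Connectedness.
Local Open Scope classical_set_scope.
Local Open Scope ring_scope.

Lemma closure_meets_closureC (R : realType) (V : normedModType R) (D : set V) x y :
  D x -> ~ D y -> exists z, closure D z /\ closure (~` D) z.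
Proof.
move=> Dx nDy; apply: contrapT => no_z.
have sepD : separated D (~` D).
  split; rewrite -subset0 => z [].
    by move=> clz nDz; apply: no_z; exists z; split => //; exact: subset_closure.
  by move=> Dz clz; apply: no_z; exists z; split => //; exact: subset_closure.
pose seg := (fun s : R => x + s *: (y - x)) @` `[0, 1].
have seg_connected : connected seg.
  apply: connected_continuous_connected; first exact: segment_connected.
  apply: continuous_subspaceT => s.
  apply: (continuousD (f := fun _ : R => x) (g := fun s : R => s *: (y - x))).
    exact: cst_continuous.
  by apply: continuousZr_tmp; exact: cvg_id.
have seg_x : seg x.
  by exists 0; [rewrite /= in_itv /= lexx ler01 | rewrite scale0r addr0].
have seg_y : seg y.
  by exists 1; [rewrite /= in_itv /= lexx ler01 | rewrite scale1r addrC subrK].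
have seg_cover : seg `<=` D `|` ~` D by rewrite setUv.
have [segD | segC] := connected_subset sepD seg_cover seg_connected.
  exact: nDy (segD _ seg_y).
exact: segC _ seg_x Dx.
Qed.

Lemma closure_preimage_setC1 (T : topologicalType) (A : finType) (f : T -> A) a z :
  closure (~` (f @^-1` [set a])) z -> exists2 b, b != a & closure (f @^-1` [set b]) z.
Proof.
move=> clz.
have cl_fibers : closure (~` (f @^-1` [set a])) `<=`
    \bigcup_(b in [set b | b != a]) closure (f @^-1` [set b]).
  rewrite [X in _ `<=` X](closure_id _).1; last first.
    by apply: closed_bigcup => [|b _]; [exact: finite_finset | exact: closed_closure].
  apply: closureS => s /= fsa; exists (f s); first exact/eqP.
  exact: subset_closure.
by have [b /= ba clb] := cl_fibers z clz; exists b.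
Qed.

End Connectedness.

Lemma sensitivity_gt0 (R : realType) m (f : 'rV[R]_m -> alloc m) :
  (0 < m)%N -> (forall a, exists t, f t = a) -> (0 < sensitivity (indiff f))%N.
Proof.
move=> m_gt0 f_onto.
pose empty : alloc m := [ffun=> false].
have [t0 ft0] := f_onto empty; have [t1 ft1] := f_onto [ffun=> true].
have ft1_ne : ~ (f @^-1` [set empty])%classic t1.
  by rewrite /= ft1 => /ffunP /(_ (Ordinal m_gt0)); rewrite !ffunE.
have [t [cl_empty cl_rest]] := closure_meets_closureC ft0 ft1_ne.
have [b b_ne cl_b] := closure_preimage_setC1 cl_rest.
have cell : indiff f [set empty; b]%SET.
  by exists t => c; rewrite !inE => /orP [] /eqP ->.
apply: leq_trans (Cd_le_sensitivity cell (set22 empty b) (set21 empty b)).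
have /eqP empty0 : norm1 empty == 0%N by rewrite norm1_eq0.
by rewrite /Cd empty0 subn0 sub0n addn0 lt0n norm1_eq0.
Qed.

Theorem proposition4p1 (R : realType) (m : nat) : (1 <= m)%N -> is_mu_c R m 1.
Proof.
move=> m_gt0; split.
  exists (indiff (@argmax_alloc R m)); split.
    exists (@argmax_alloc R m); split => //.
      exact: argmax_alloc_implementable.
    exact: argmax_alloc_surjective.
  apply/eqP; rewrite eqn_leq sensitivity_argmax_alloc sensitivity_gt0 //.
  exact: argmax_alloc_surjective.
by move=> I [f [_ f_onto ->]]; exact: sensitivity_gt0.
Qed.
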